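(* Let $k\ge2$ and let $\mathcal{M}_1,\dots,\mathcal{M}_k$ be matroids on a finite ground set $E$; let $T$ be independent in all of them, let $p\in(0,1)$, let $\Psi(e)$, $e\in T$, be i.i.d. with $\Pr[\Psi(e)=1]=1-p$, and let $S=\{e\in T:\Psi(e)=1\}$. Let $i\in[k]$, let $\tilde E\subseteq\mathrm{span}_i(T)$, and let $\tilde I\subseteq\tilde E$ be independent in $\mathcal{M}_i$ and in $\mathcal{M}_j/T$ for every $j\ne i$. Then for any fixed arrival order of the elements of $\tilde E$, $$\mathbb{E}_\Psi\left[\left|\mathrm{Greedy}(\mathcal{M}_1/T,\dots,\mathcal{M}_{i-1}/T,\mathcal{M}_i/S,\mathcal{M}_{i+1}/T,\dots,\mathcal{M}_k/T,\ \tilde E)\right|\right]\ge\frac{p}{1+p(k-1)}|\tilde I|.$$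
   Context: $\mathrm{span}_i(T)=\{e\in E:\mathrm{rank}_{\mathcal{M}_i}(T\cup\{e\})=\mathrm{rank}_{\mathcal{M}_i}(T)\}$. For a matroid $\mathcal{M}$ and independent set $X$, the contraction $\mathcal{M}/X$ has as independent sets those $A$ with $A\cap X=\emptyset$ and $A\cup X$ independent in $\mathcal{M}$. $\mathrm{Greedy}(\mathcal{N}_1,\dots,\mathcal{N}_k,\tilde E)$ processes the elements of $\tilde E$ in the given order starting from the empty set and adds an element whenever the current set together with it is independent in every $\mathcal{N}_j$; it returns the resulting set. *)

From mathcomp Require Import all_boot all_order all_algebra.
Set Implicit Arguments. Unset Strict Implicit. Unset Printing Implicit Defensive.
Import Order.TTheory GRing.Theory Num.Theory.

Section Matroids.
Variable E : finType.

Definition is_matroid (I : pred {set E}) : Prop :=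
  [/\ I set0,
      (forall A B : {set E}, A \subset B -> I B -> I A) &
      (forall A B : {set E}, I A -> I B -> #|A| < #|B| ->
          exists2 x, x \in B :\: A & I (x |: A))].

Definition mrank (I : pred {set E}) (A : {set E}) : nat :=
  \max_(B : {set E} | (B \subset A) && I B) #|B|.

Definition mspan (I : pred {set E}) (T : {set E}) : {set E} :=
  [set e | mrank I (e |: T) == mrank I T].

(* contraction M/X (X independent): A indep iff A disjoint from X and A u X indep *)
Definition contract (I : pred {set E}) (X : {set E}) : pred {set E} :=
  fun A => [disjoint A & X] && I (A :|: X).

Definition greedy (k : nat) (N : 'I_k -> pred {set E}) (s : seq E) : {set E} :=
  foldl (fun G e => if [forall j, N j (e |: G)] then e |: G else G) set0 s.

Definition contract_family (k : nat) (M : 'I_k -> pred {set E}) (i : 'I_k)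
  (S T : {set E}) : 'I_k -> pred {set E} :=
  fun j => if j == i then contract (M j) S else contract (M j) T.

End Matroids.

From mathcomp Require Import all_boot all_order all_algebra.
From mathcomp Require Import ring lra.
Import Order.TTheory GRing.Theory Num.Theory.
Set Implicit Arguments. Unset Strict Implicit. Unset Printing Implicit Defensive.

(* Fix an outcome S and let G be the greedy output. An element of It missing
   from G was rejected either by some M_j/T with j != i or by M_i/S alone.
   As It and G are both independent in M_j/T, each j != i rejects at most
   |G| - |G n It| elements, whence |It| <= (k-1)|G| + |B| where B is the set of
   elements blocked by M_i/S alone. Call t in S critical if the run for S - t
   is dependent in M_i/S: removing a non-critical t changes no decision of the
   run, and an exchange argument in M_i gives |B| <= |G| + #critical(S).
   Conversely at most |G| elements t of T - S are critical for S + t. Moving t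
   in and out of S multiplies the probability by (1-p)/p, so
   p E[#critical] <= (1-p) E|G|, and altogether
   |It| <= (k + (1-p)/p) E|G| = (1 + p(k-1))/p E|G|. *)

Lemma cardsU_disjoint (E : finType) (A B : {set E}) :
  [disjoint A & B] -> #|A :|: B| = #|A| + #|B|.
Proof. by move=> dAB; rewrite cardsU (disjoint_setI0 dAB) cards0 subn0. Qed.

Lemma card_bigcup_le (E : finType) (I : Type) (r : seq I) (P : pred I)
    (A : I -> {set E}) :
  #|\bigcup_(j <- r | P j) A j| <= \sum_(j <- r | P j) #|A j|.
Proof.
apply: (big_ind2 (fun (X : {set E}) n => #|X| <= n)) => //; first by rewrite cards0.
by move=> X1 X2 n1 n2 le1 le2; apply: leq_trans (leq_card_setU _ _) (leq_add _ _).
Qed.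

Lemma disjoint_setU1 (E : finType) (x : E) (A B : {set E}) :
  [disjoint x |: A & B] = (x \notin B) && [disjoint A & B].
Proof. by rewrite !disjoints_subset subUset sub1set inE. Qed.

Section Matroid.
Variables (E : finType) (I : pred {set E}).
Hypothesis matI : is_matroid I.
Implicit Types (A B G Q W X Y : {set E}) (b x z : E).

Lemma matroid_sub A B : A \subset B -> I B -> I A.
Proof. by case: matI => _ + _; apply. Qed.

Lemma matroid_aug A B : I A -> I B -> #|A| < #|B| ->
  exists2 x, x \in B :\: A & I (x |: A).
Proof. by case: matI => _ _; apply. Qed.

Lemma matroid_extend A Y : I A -> I Y ->
  exists A', [/\ A \subset A', A' \subset A :|: Y, #|Y| <= #|A'| & I A'].
Proof.
move=> IA IY; have [n] := ubnP (#|Y| - #|A|); elim: n A IA => // n IHn A IA.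
case: (leqP #|Y| #|A|) => [leYA _|ltAY].
  by exists A; rewrite subxx subsetUl.
have [x /setDP[xY xA] Ix] := matroid_aug IA IY ltAY.
rewrite ltnS => leYA; have [|A' [sxAA' sA'xAY leYA' IA']] := IHn _ Ix.
  by apply: leq_trans leYA; rewrite cardsU1 xA add1n subnS prednK // subn_gt0.
exists A'; split=> //; first exact: subset_trans (subsetU1 x A) sxAA'.
by apply: subset_trans sA'xAY _; rewrite !subUset sub1set inE xY orbT subsetUl subsetUr.
Qed.

Lemma matroid_exchange W Y b : I Y -> W \subset Y -> I (b |: W) -> b \notin Y ->
  I (b |: Y) \/ exists2 z, z \in Y :\: W & I ((b |: Y) :\ z).
Proof.
move=> IY sWY IbW bY.
have [A' [sbWA' sA'bY leYA' IA']] := matroid_extend IbW IY.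
have {}sA'bY : A' \subset b |: Y.
  by apply: subset_trans sA'bY _; rewrite -setUA setUS // subUset sWY subxx.
have [sbYA'|/subsetPn[z zbY zA']] := boolP (b |: Y \subset A').
  by left; apply: matroid_sub IA'.
have zb : z != b by apply: contraNneq zA' => ->; rewrite (subsetP sbWA') ?setU11.
have zY : z \in Y by move: zbY; rewrite in_setU1 (negbTE zb).
right; exists z.
  by rewrite inE zY andbT; apply: contraNN zA' => zW; rewrite (subsetP sbWA') // setU1r.
suff ->: (b |: Y) :\ z = A' by [].
apply/eqP; rewrite eq_sym eqEcard; apply/andP; split.
  apply/subsetP => x xA'; rewrite in_setD1 (subsetP sA'bY) // andbT.
  by apply: contraNneq zA' => <-.
by have := cardsD1 z (b |: Y); rewrite zbY cardsU1 bY => /addnI <-.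
Qed.

Lemma contract_sub X A B : A \subset B -> contract I X B -> contract I X A.
Proof.
move=> sAB /andP[dBX IBX]; rewrite /contract (disjointWl sAB dBX) /=.
by apply: matroid_sub IBX; apply: setSU.
Qed.

Lemma contractW X A Y : [disjoint A & X] -> A :|: X \subset Y -> I Y ->
  contract I X A.
Proof. by move=> dAX sAXY IY; rewrite /contract dAX (matroid_sub sAXY IY). Qed.

Lemma contract_set0 X : I X -> contract I X set0.
Proof. by move=> IX; rewrite /contract set0U IX andbT -setI_eq0 set0I. Qed.

Lemma contract_matroid X : I X -> is_matroid (contract I X).
Proof.
move=> IX; split.
- exact: contract_set0.
- exact: contract_sub.
move=> A B /andP[dAX IAX] /andP[dBX IBX] ltAB.
have [|x /setDP[xBX xAX] IxAX] := matroid_aug IAX IBX.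
  by rewrite !cardsU_disjoint // ltn_add2r.
move: xAX; rewrite in_setU negb_or => /andP[xA xX].
exists x; first by rewrite inE xA; move: xBX; rewrite in_setU (negbTE xX) orbF.
by rewrite /contract -setUA IxAX disjoint_setU1 xX dAX.
Qed.

(* Otherwise augmenting [G] from [Q :|: (G :&: A)] would accept an element of [Q]. *)
Lemma card_rejected_le G A Q (P : E -> {set E}) : I G -> I A -> Q \subset A :\: G ->
  (forall e, e \in Q -> P e \subset G /\ ~~ I (e |: P e)) ->
  #|Q| + #|G :&: A| <= #|G|.
Proof.
move=> IG IA sQAG rejQ.
have dQGA : [disjoint Q & G :&: A].
  apply/pred0P => x; rewrite !inE; apply/negP => /andP[/(subsetP sQAG)].
  by rewrite inE => /andP[/negbTE-> _].
rewrite -cardsU_disjoint // leqNgt; apply/negP => ltG.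
have [|x /setDP[xQGA xG] IxG] := matroid_aug IG _ ltG.
  by apply: matroid_sub IA; rewrite subUset subsetIr (subset_trans sQAG) ?subsetDl.
have xQ : x \in Q by move: xQGA; rewrite in_setU in_setI (negbTE xG) orbF.
have [sPG /negP] := rejQ x xQ; apply; apply: matroid_sub IxG.
exact: setUS.
Qed.

End Matroid.

Section Greedy.
Variables (E : finType) (k : nat) (F : 'I_k -> pred {set E}).
Implicit Types (G : {set E}) (s : seq E) (e : E).

Definition greedy_step G e := if [forall j, F j (e |: G)] then e |: G else G.

Lemma greedyE s : greedy F s = foldl greedy_step set0 s.
Proof. by []. Qed.

Lemma greedy_step_fold_sup G s : G \subset foldl greedy_step G s.
Proof.
elim: s G => [|e s IHs] G /=; first exact: subxx.
apply: subset_trans (IHs _); rewrite /greedy_step.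
by case: ifP => _; [apply: subsetU1 | apply: subxx].
Qed.

Lemma greedy_step_fold_sub G s : foldl greedy_step G s \subset G :|: [set x in s].
Proof.
elim: s G => [|e s IHs] G /=; first exact: subsetUl.
apply: subset_trans (IHs _) _; rewrite /greedy_step; apply/subsetP => x.
case: ifP => _; rewrite !inE; last by case/orP => ->; rewrite ?orbT.
by case/orP => [/orP[]|] ->; rewrite ?orbT.
Qed.

Lemma greedy_rcons s e : greedy F (rcons s e) = greedy_step (greedy F s) e.
Proof. by rewrite !greedyE foldl_rcons. Qed.

Lemma greedy_catl s1 s2 : greedy F s1 \subset greedy F (s1 ++ s2).
Proof. by rewrite !greedyE foldl_cat; apply: greedy_step_fold_sup. Qed.

Lemma greedy_indep s : (forall j, F j set0) -> forall j, F j (greedy F s).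
Proof.
rewrite greedyE; elim: s set0 => [|e s IHs] G0 FG0 //=; apply: IHs => j.
by rewrite /greedy_step; case: ifP => [/forallP|_].
Qed.

Definition greedy_before s e := greedy F (take (index e s) s).

Lemma greedy_before_sub s e : greedy_before s e \subset greedy F s.
Proof. by rewrite /greedy_before -{3}(cat_take_drop (index e s) s) greedy_catl. Qed.

Lemma mem_greedy s e : uniq s -> e \in s ->
  (e \in greedy F s) = [forall j, F j (e |: greedy_before s e)].
Proof.
move=> us es; set s1 := take (index e s) s; set s2 := drop (index e s).+1 s.
have def_s : s = s1 ++ e :: s2.
  by rewrite -{1}(cat_take_drop (index e s) s) (drop_nth e) ?index_mem ?nth_index.
have e_s2 : e \notin s2 by move: us; rewrite def_s cat_uniq /= => /and4P[].
have e_s1 : e \notin greedy_before s e.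
  apply/negP => /(subsetP (greedy_step_fold_sub _ _)).
  by rewrite !inE in_take ?index_mem // ltnn.
rewrite [in LHS]def_s greedyE foldl_cat /= -greedyE -/(greedy_before s e).
set G1 := greedy_step _ e.
have ->: (e \in foldl greedy_step G1 s2) = (e \in G1).
  apply/idP/idP => [|/(subsetP (greedy_step_fold_sup _ _))//].
  by move/(subsetP (greedy_step_fold_sub _ _)); rewrite in_setU inE (negbTE e_s2) orbF.
by rewrite /G1 /greedy_step; case: ifP; rewrite ?setU11 // (negbTE e_s1).
Qed.

End Greedy.

Lemma greedy_prefix_eq (E : finType) (k : nat) (F F' : 'I_k -> pred {set E}) (s : seq E) :
  (forall j (X : {set E}), F j X -> F' j X) ->
  (forall j (X : {set E}), X \subset greedy F' s -> F' j X -> F j X) ->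
  forall s1 s2, s1 ++ s2 = s -> greedy F s1 = greedy F' s1.
Proof.
move=> FF' F'F; elim/last_ind => [//|s1 e IHs1] s2 def_s.
have def_s' : s1 ++ e :: s2 = s by rewrite -def_s -cats1 -catA.
rewrite !greedy_rcons (IHs1 _ def_s') /greedy_step.
set G' := greedy F' s1.
suff ->: [forall j, F j (e |: G')] = [forall j, F' j (e |: G')] by [].
apply/forallP/forallP => acc j; first exact: FF'.
apply: F'F (acc j); have ->: e |: G' = greedy F' (rcons s1 e).
  by rewrite greedy_rcons /greedy_step; move/forallP: acc => ->.
by rewrite -def_s greedy_catl.
Qed.

Section ContractedGreedy.
Variables (E : finType) (k : nat) (M : 'I_k -> pred {set E}) (T : {set E}).
Variables (i : 'I_k) (s : seq E).
Hypotheses (matM : forall j, is_matroid (M j)) (MT : forall j, M j T).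
Implicit Types (S : {set E}) (b t : E).

Local Notation F S := (contract_family M i S T).
Local Notation G S := (greedy (F S) s).
Local Notation before S := (greedy_before (F S) s).

Lemma contract_family_i S : F S i = contract (M i) S.
Proof. by rewrite /contract_family eqxx. Qed.

Lemma contract_family_neq S j : j != i -> F S j = contract (M j) T.
Proof. by rewrite /contract_family => /negbTE->. Qed.

Lemma contract_family_greedy S : S \subset T -> forall j, F S j (G S).
Proof.
move=> sST; apply: greedy_indep => j; have [->|ji] := eqVneq j i.
  by rewrite contract_family_i contract_set0 // (matroid_sub (matM i) sST).
by rewrite contract_family_neq // contract_set0.
Qed.

Lemma greedy_contract_i S : S \subset T ->
  [disjoint G S & S] /\ M i (G S :|: S).
Proof.
by move=> sST; have := contract_family_greedy sST i; rewrite contract_family_i => /andP[].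
Qed.

Definition critical S t := ~~ contract (M i) S (G (S :\ t)).

Lemma greedy_noncritical S t : t \in S -> ~~ critical S t ->
  G S = G (S :\ t) /\ before S =1 before (S :\ t).
Proof.
move=> tS /negPn crit.
have eq_prefix s1 s2 : s1 ++ s2 = s -> greedy (F S) s1 = greedy (F (S :\ t)) s1.
  apply: greedy_prefix_eq => j X; have [->|ji] := eqVneq j i;
    rewrite ?contract_family_i ?contract_family_neq //.
    move=> /andP[dXS IXS]; apply/andP; split.
      by apply: disjointWr dXS; apply: subD1set.
    by apply: (matroid_sub (matM i)) IXS; apply: setUS; apply: subD1set.
  by move=> sXG _; apply: (contract_sub (matM i)) crit.
split; first by apply: (eq_prefix _ [::]); rewrite cats0.
by move=> e; apply: eq_prefix (cat_take_drop (index e s) s).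
Qed.

Lemma card_critical_add S : S \subset T ->
  #|[set t in T :\: S | critical (t |: S) t]| <= #|G S|.
Proof.
move=> sST; have [dGS IGS] := greedy_contract_i sST.
set U := [set t in _ | _].
have sUTS : U \subset T :\: S by apply/subsetP => x; rewrite inE => /andP[].
have dUS : [disjoint U & S].
  by rewrite disjoints_subset (subset_trans sUTS) // setDE subsetIr.
rewrite leqNgt; apply/negP => ltGU.
have [||x /setDP[xUS xGS] IxGS] := matroid_aug (matM i) IGS (B := U :|: S).
- apply: (matroid_sub (matM i)) (MT i).
  by rewrite subUset sST (subset_trans sUTS) ?subsetDl.
- by rewrite !cardsU_disjoint // ltn_add2r.
move: xGS; rewrite in_setU negb_or => /andP[xG xS].
have: x \in U by move: xUS; rewrite in_setU (negbTE xS) orbF.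
rewrite inE /critical setU1K // => /andP[_ /negP]; apply.
by rewrite /contract disjoint_sym disjoint_setU1 xG disjoint_sym dGS setUCA.
Qed.

Variable It : {set E}.
Hypotheses (us : uniq s) (sIts : It \subset [set x in s]).

Definition blocked_by_i S := [set e in It |
  [forall j, (j != i) ==> F S j (e |: before S e)] && ~~ F S i (e |: before S e)].

Lemma mem_It_seq e : e \in It -> e \in s.
Proof. by move/(subsetP sIts); rewrite inE. Qed.

Lemma blocked_notin_greedy S b : b \in blocked_by_i S -> b \notin G S.
Proof.
rewrite inE => /andP[bIt /andP[_ rej]]; rewrite mem_greedy ?mem_It_seq //.
by apply/forallP => /(_ i); apply/negP.
Qed.

Lemma blocked_noncritical S b t : b \in blocked_by_i S -> t \in S ->
  ~~ critical S t -> ~~ contract (M i) (S :\ t) (b |: before S b).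
Proof.
move=> bB tS crit; have [eqG eqB] := greedy_noncritical tS crit.
have bIt : b \in It by move: bB; rewrite inE => /andP[].
have := blocked_notin_greedy bB; rewrite eqG mem_greedy ?mem_It_seq // -eqB.
apply: contra => IbP; apply/forallP => j.
have [->|ji] := eqVneq j i; first by rewrite contract_family_i.
move: bB; rewrite inE => /and3P[_ /forallP/(_ j) + _]; rewrite ji /=.
by rewrite !contract_family_neq.
Qed.

Lemma card_blocked S : S \subset T -> M i It ->
  #|blocked_by_i S| <= #|G S| + #|[set t in S | critical S t]|.
Proof.
move=> sST IIt; have [dGS IGS] := greedy_contract_i sST.
set X := [set t in S | _].
have sXS : X \subset S by apply/subsetP => x; rewrite inE => /andP[].
have sGXGS : G S :|: X \subset G S :|: S by apply: setUS.
have IB : M i (blocked_by_i S).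
  by apply: (matroid_sub (matM i)) IIt; apply/subsetP => x; rewrite inE => /andP[].
rewrite -cardsU_disjoint; last exact: disjointWr sXS dGS.
rewrite leqNgt; apply/negP => ltB.
have [b /setDP[bB bGX] IbGX] :=
  matroid_aug (matM i) (matroid_sub (matM i) sGXGS IGS) IB ltB.
have bG := blocked_notin_greedy bB.
set P := before S b; have PG : {subset P <= G S} by apply/subsetP/greedy_before_sub.
have dPS : [disjoint P & S] by apply: disjointWl dGS; apply/subsetP.
have rej_i : ~~ contract (M i) S (b |: P).
  by move: bB; rewrite inE contract_family_i => /and3P[].
have [bS|bS] := boolP (b \in S).
  have crit : ~~ critical S b by move: bGX; rewrite !inE bS negb_or => /andP[].
  case/negP: (blocked_noncritical bB bS crit).
  apply: (contractW (matM i) _ _ IGS).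
    by rewrite disjoint_setU1 setD11 (disjointWr (subD1set S b) dPS).
  apply/subsetP => x; rewrite !inE => /orP[/orP[/eqP->|/PG->]|/andP[_ ->]];
    by rewrite ?bS ?orbT.
have bY : b \notin G S :|: S by rewrite in_setU negb_or bG.
have [IbY|[z /setDP[zY zGX] IbYz]] :=
  matroid_exchange (matM i) IGS sGXGS IbGX bY.
  case/negP: rej_i; apply: (contractW (matM i) _ _ IbY).
    by rewrite disjoint_setU1 bS.
  apply/subsetP => x; rewrite !inE => /orP[/orP[->|/PG->]|->]; by rewrite ?orbT.
move: zGX zY; rewrite !inE negb_or => /andP[zG zX]; rewrite (negbTE zG) /= => zS.
have crit : ~~ critical S z by move: zX; rewrite zS.
case/negP: (blocked_noncritical bB zS crit); apply: (contractW (matM i) _ _ IbYz).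
  by rewrite disjoint_setU1 in_setD1 (negbTE bS) andbF (disjointWr (subD1set S z) dPS).
apply/subsetP => x; rewrite !inE => /orP[/orP[/eqP->|/PG xG]|/andP[-> ->]];
  rewrite ?eqxx ?orbT ?andbT //.
- by apply: contraNneq bY => ->; rewrite inE zS orbT.
- by rewrite xG orbT andbT; apply: contraNneq zG => <-.
Qed.

Lemma card_indep_le_blocked S : (2 <= k)%N -> S \subset T ->
  (forall j, j != i -> contract (M j) T It) ->
  #|It| <= (k - 1) * #|G S| + #|blocked_by_i S|.
Proof.
move=> k_ge2 sST IIt.
pose Q j := [set e in It :\: G S | ~~ F S j (e |: before S e)].
have cardQ j : j != i -> #|Q j| + #|G S :&: It| <= #|G S|.
  move=> ji; have FSj := contract_family_neq S ji.
  apply: (card_rejected_le (contract_matroid (matM j) (MT j)) _ (IIt j ji)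
           (P := before S)).
  - by rewrite -FSj contract_family_greedy.
  - by apply/subsetP => x; rewrite inE => /andP[].
  by move=> e; rewrite inE -FSj => /andP[_ rej]; split=> //; apply: greedy_before_sub.
have cover : It :\: G S \subset blocked_by_i S :|: \bigcup_(j | j != i) Q j.
  apply/subsetP => e; rewrite in_setD => /andP[eG eIt].
  move: (eG); rewrite mem_greedy ?mem_It_seq // => /forallPn[j rej_j].
  have [acc|/forallPn[j']] := boolP [forall j, (j != i) ==> F S j (e |: before S e)].
    rewrite in_setU inE eIt acc /=.
    have [eji|ji] := eqVneq j i; first by move: rej_j; rewrite eji => ->.
    by move/forallP/(_ j): acc; rewrite ji (negbTE rej_j).
  rewrite negb_imply => /andP[j'i rej']; rewrite in_setU; apply/orP; right.
  by apply/bigcupP; exists j' => //; rewrite inE in_setD eG eIt.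
have leQ : \sum_(j | j != i) #|Q j| <= (k - 1) * (#|G S| - #|G S :&: It|).
  rewrite subn1 -[k in k.-1]card_ord -(cardC1 i) -sum_nat_const leq_sum // => j ji.
  by rewrite leq_subRL ?subset_leq_card ?subsetIl // addnC cardQ.
have leK : (k - 1) * (#|G S| - #|G S :&: It|) + #|G S :&: It| <= (k - 1) * #|G S|.
  have kK : 0 < k - 1 by rewrite subn_gt0.
  rewrite mulnBr; apply: leq_trans (leq_add (leqnn _) (leq_pmull _ kK)) _.
  by rewrite subnK // leq_mul2l subset_leq_card ?subsetIl ?orbT.
have leItG : #|It :\: G S| <= #|blocked_by_i S| + (k - 1) * (#|G S| - #|G S :&: It|).
  apply: leq_trans (subset_leq_card cover) (leq_trans (leq_card_setU _ _) _).
  by rewrite leq_add2l (leq_trans (card_bigcup_le _ _ _) leQ).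
rewrite -(cardsID (G S) It) setIC; apply: leq_trans (leq_add (leqnn _) leItG) _.
by rewrite addnCA addnC leq_add2r addnC.
Qed.

End ContractedGreedy.

Local Open Scope ring_scope.

Lemma powerset_D1 (E : finType) (T S : {set E}) t :
  (S \in powerset T) && (t \notin S) = (S \in powerset (T :\ t)).
Proof.
rewrite !powersetE; apply/andP/idP => [[sST tS]|sSTt].
  apply/subsetP => x xS; rewrite in_setD1 (subsetP sST) // andbT.
  by apply: contraNneq tS => <-.
split; first exact: subset_trans sSTt (subD1set T t).
by apply/negP => /(subsetP sSTt); rewrite setD11.
Qed.

Lemma sum_powerset_mem (R : nmodType) (E : finType) (T : {set E}) t (F : {set E} -> R) :
  t \in T ->
  \sum_(S in powerset T | t \in S) F S = \sum_(S in powerset (T :\ t)) F (t |: S).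
Proof.
move=> tT; rewrite (reindex_onto (fun S => t |: S) (fun S => S :\ t)); last first.
  by move=> S /andP[_]; apply: setD1K.
apply: eq_bigl => S; rewrite setU11 andbT -powerset_D1.
have [tS|tS] := boolP (t \in S); rewrite ?andbF ?andbT.
  by apply/negbTE/negP => /andP[_ /eqP eS]; move: tS; rewrite -eS setD11.
by rewrite setU1K // eqxx andbT !powersetE subUset sub1set tT.
Qed.

Lemma sum_powerset_binomial (R : comPzSemiRingType) (E : finType) (T : {set E}) (a b : R) :
  \sum_(S in powerset T) a ^+ #|S| * b ^+ (#|T| - #|S|) = (a + b) ^+ #|T|.
Proof.
have [n] := ubnP #|T|; elim: n T => // n IHn T.
have [->|[t tT]] := set_0Vmem T.
  by rewrite powerset0 big_set1 cards0 !expr0 mulr1.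
have cardT : #|T| = #|T :\ t|.+1 by rewrite (cardsD1 t T) tT.
rewrite cardT ltnS => ltTn.
rewrite (bigID (fun S : {set E} => t \in S)) /= sum_powerset_mem //.
rewrite (eq_bigl (fun S : {set E} => S \in powerset (T :\ t))); last first.
  by move=> S; apply: powerset_D1.
rewrite exprS -(IHn _ ltTn) mulrDl !big_distrr /=; congr (_ + _).
  apply: eq_bigr => S; rewrite powersetE => sSTt.
  have tS : t \notin S by apply/negP => /(subsetP sSTt); rewrite setD11.
  by rewrite cardsU1 tS add1n exprS -mulrA subSS.
apply: eq_bigr => S; rewrite powersetE => /subset_leq_card leS.
by rewrite subSn // exprS mulrCA.
Qed.

Lemma sum_powerset_pairs (R : nmodType) (E : finType) (T : {set E})
    (f : {set E} -> E -> R) :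
  \sum_(S in powerset T) \sum_(t in S) f S t =
  \sum_(S in powerset T) \sum_(t in T :\: S) f (t |: S) t.
Proof.
rewrite (exchange_big_dep (fun t => t \in T)) => [|S t]; last first.
  by rewrite powersetE => /subsetP/(_ t).
rewrite [RHS](exchange_big_dep (fun t => t \in T)) => [|S t _]; last first.
  by rewrite in_setD => /andP[].
apply: eq_bigr => t tT; rewrite sum_powerset_mem //.
by apply: eq_bigl => S; rewrite in_setD tT andbT powerset_D1.
Qed.

Lemma natr_card_setIdE (R : pzSemiRingType) (E : finType) (A : {set E}) (P : pred E) :
  (#|[set x in A | P x]|)%:R = \sum_(x in A) (P x)%:R :> R.
Proof.
rewrite -sum1_card natr_sum big_mkcond [RHS]big_mkcond /=.
by apply: eq_bigr => x _; rewrite inE; case: (x \in A); case: (P x).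
Qed.

Section SubsetWeights.
Variables (E : finType) (T : {set E}).
Implicit Types S : {set E}.

(* With [S] distributed as in the theorem, a pair [(S, t)] with [t \in S]
   has the same probability as [(S :\ t, t)] up to the factor (1 - p) / p. *)
Lemma weighted_count_shift (R : comPzRingType) (p : R) (c : {set E} -> E -> bool) :
  p * \sum_(S in powerset T) (1 - p) ^+ #|S| * p ^+ (#|T| - #|S|) *
        (#|[set t in S | c S t]|)%:R
  = (1 - p) * \sum_(S in powerset T) (1 - p) ^+ #|S| * p ^+ (#|T| - #|S|) *
        (#|[set t in T :\: S | c (t |: S) t]|)%:R.
Proof.
rewrite !big_distrr /=.
under eq_bigr => S _ do rewrite natr_card_setIdE !big_distrr /=.
rewrite sum_powerset_pairs; apply: eq_bigr => S; rewrite powersetE => sST.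
rewrite natr_card_setIdE !big_distrr /=; apply: eq_bigr => t.
rewrite in_setD => /andP[tS tT].
have ltST : (#|S| < #|T|)%N.
  by rewrite proper_card // properEneq sST andbT; apply: contraNneq tS => ->.
rewrite cardsU1 tS add1n exprS subnS -(prednK (n := (#|T| - #|S|)%N)) ?subn_gt0 //.
by rewrite exprS /=; ring.
Qed.

Lemma expectation_lower_bound (R : realFieldType) (p : R) (k n : nat)
    (g b x u : {set E} -> nat) :
  0 < p < 1 ->
  (forall S, S \subset T -> n <= (k - 1) * g S + b S)%N ->
  (forall S, S \subset T -> b S <= g S + x S)%N ->
  (forall S, S \subset T -> u S <= g S)%N ->
  p * \sum_(S in powerset T) (1 - p) ^+ #|S| * p ^+ (#|T| - #|S|) * (x S)%:R
   = (1 - p) * \sum_(S in powerset T) (1 - p) ^+ #|S| * p ^+ (#|T| - #|S|) * (u S)%:R ->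
  p / (1 + p * (k - 1)%:R) * n%:R <=
    \sum_(S in powerset T) (1 - p) ^+ #|S| * p ^+ (#|T| - #|S|) * (g S)%:R.
Proof.
move=> /andP[p_gt0 p_lt1] len leb leu shift.
have p_ge0 : 0 <= p by apply: ltW.
have q_ge0 : 0 <= 1 - p by rewrite subr_ge0 ltW.
pose w S := (1 - p) ^+ #|S| * p ^+ (#|T| - #|S|).
pose Ew (f : {set E} -> nat) := \sum_(S in powerset T) w S * (f S)%:R.
have w_ge0 S : 0 <= w S by rewrite mulr_ge0 // exprn_ge0.
have Ew_le f f' : (forall S, S \subset T -> f S <= f' S)%N -> Ew f <= Ew f'.
  move=> lef; apply: ler_sum => S; rewrite powersetE => sST.
  by rewrite ler_wpM2l // ler_nat lef.
have EwD f f' : Ew (fun S => f S + f' S)%N = Ew f + Ew f'.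
  by rewrite -big_split; apply: eq_bigr => S _; rewrite natrD mulrDr.
have EwM m f : Ew (fun S => m * f S)%N = m%:R * Ew f.
  by rewrite big_distrr; apply: eq_bigr => S _; rewrite natrM mulrCA.
have Ew_cst : Ew (fun=> n) = n%:R.
  by rewrite /Ew -big_distrl /= sum_powerset_binomial subrK expr1n mul1r.
have len' : n%:R <= (k - 1)%:R * Ew g + Ew b.
  by rewrite -Ew_cst -EwM -EwD; apply: Ew_le.
have leb' : Ew b <= Ew g + Ew x by rewrite -EwD; apply: Ew_le.
have leu' : Ew u <= Ew g by apply: Ew_le.
have pK_ge0 : 0 <= p * (k - 1)%:R by rewrite mulr_ge0.
rewrite mulrAC ler_pdivrMr; last by lra.
move: shift len' leb' leu'; rewrite -/(Ew x) -/(Ew u) -/(Ew g).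
move: (Ew x) (Ew u) (Ew g) (Ew b) ((k - 1)%:R : R) => X U G B K shift len' leb' leu'.
have := ler_wpM2l p_ge0 len'; have := ler_wpM2l p_ge0 leb'.
have := ler_wpM2l q_ge0 leu'; lra.
Qed.

End SubsetWeights.

Theorem lemma15 (R : realFieldType) (E : finType) (k : nat)
  (M : 'I_k -> pred {set E}) (T : {set E}) (p : R) (i : 'I_k)
  (Et It : {set E}) (s : seq E) :
  (2 <= k)%N ->
  (forall j, is_matroid (M j)) ->
  (forall j, M j T) ->
  0 < p < 1 ->
  Et \subset mspan (M i) T ->
  It \subset Et ->
  M i It ->
  (forall j, j != i -> contract (M j) T It) ->
  uniq s -> [set x in s] = Et ->
  \sum_(S in powerset T)
      (1 - p) ^+ #|S| * p ^+ (#|T| - #|S|) *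
      (#|greedy (contract_family M i S T) s|)%:R
    >= p / (1 + p * (k - 1)%:R) * (#|It|)%:R.
Proof.
move=> k_ge2 matM MT p01 _ sItEt IIt IItT us def_Et.
have sIts : It \subset [set x in s] by rewrite def_Et.
apply: (expectation_lower_bound
  (b := fun S => #|blocked_by_i M T i s It S|)
  (x := fun S => #|[set t in S | critical M T i s S t]|)
  (u := fun S => #|[set t in T :\: S | critical M T i s (t |: S) t]|)) => //.
- by move=> S sST; apply: card_indep_le_blocked.
- by move=> S sST; apply: card_blocked.
- by move=> S sST; apply: card_critical_add.
- exact: weighted_count_shift.
Qed.
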